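(* Let $k\ge 2$ be an integer such that $\mathbb{Z}_k$ is an integral domain (i.e. $k$ is prime), let $q\in\{1,\dots,k-1\}$, $n\ge 3$ and $i\ge 1$ be integers, and let $\alpha(k)$ be the restricted period of the Fibonacci sequence modulo $k$. Consider the cylindrical Lights Out game on a board with $i$ rows and $n$ columns whose lights have $k$ states, with every light initially in the same state $k-q$. Then the game is one-pass solvable if and only if $i\equiv 0 \pmod{\alpha(k)}$ or $i\equiv -1 \pmod{\alpha(k)}$.
   Context: Fibonacci numbers: $F_0=0$, $F_1=1$, $F_i=F_{i-1}+F_{i-2}$. The restricted period $\alpha(k)$ is the least positive integer $m$ such that $F_m\equiv 0\pmod k$. Cylindrical Lights Out game: a grid of buttons with $i$ rows (numbered $1,\dots,i$ from top to bottom) and $n$ columns, whose left and right sides are identified, so column $1$ and column $n$ are adjacent; rows do not wrap around. Each button has a light whose state is an element of $\mathbb{Z}/k\mathbb{Z}$, state $0$ meaning ''off''. Pressing a button once adds $1 \pmod k$ to the state of its own light and to the states of the lights orthogonally adjacent to it (above, below, left, right, where they exist, with columns taken cyclically). One-pass chasing: for $r=2,3,\dots,i$ in turn, press each button in row $r$ the number of times in $\{0,\dots,k-1\}$ needed to bring the light directly above it (in row $r-1$) to state $0$. The game is one-pass solvable if after this procedure all lights on the board are in state $0$. *)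

From mathcomp Require Import all_boot all_order all_algebra.
Set Implicit Arguments. Unset Strict Implicit. Unset Printing Implicit Defensive.
Import GRing.Theory.
Local Open Scope ring_scope.

Fixpoint fib (m : nat) : nat :=
  match m with
  | 0 => 0
  | 1 => 1
  | (p.+1 as m1).+1 => (fib m1 + fib p)%N
  end.

Definition restricted_period (k a : nat) : Prop :=
  [/\ (0 < a)%N, (k %| fib a)%N &
      forall m, (0 < m)%N -> (k %| fib m)%N -> (a <= m)%N].

(* Board with rows 1..i (indexed by nat; rows outside 1..i are ignored) and
   columns 'I_n (cyclic); light states in 'Z_k. *)
Definition board (n k : nat) := nat -> 'I_n -> 'Z_k.

Definition col_adj (n : nat) (c c' : 'I_n) : bool :=
  (c != c') && ((val c' == (val c).+1 %% n)%N || (val c == (val c').+1 %% n)%N).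

Definition affects (i n : nat) (r : nat) (c : 'I_n) (r' : nat) (c' : 'I_n) : bool :=
  [&& (1 <= r')%N, (r' <= i)%N &
   ((r' == r) && (c' == c))
   || ((c' == c) && ((r' == r.+1) || (r == r'.+1)))
   || ((r' == r) && col_adj c c')].

Definition press (i n k : nat) (r : nat) (c : 'I_n) (m : 'Z_k) (s : board n k)
  : board n k :=
  fun r' c' => s r' c' + (if affects i r c r' c' then m else 0).

(* Step r of one-pass chasing: press each button (r,c) the number of times
   needed to bring light (r-1,c) to 0.  Pressing buttons of row r other than
   (r,c) does not change light (r-1,c), so these counts are all determined by
   the state before the step; the presses are applied in column order. *)
Definition chase_row (i n k : nat) (r : nat) (s : board n k) : board n k :=
  foldl (fun t (c : 'I_n) => press i r c (- s r.-1 c) t) s (enum 'I_n).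

Definition chase (i n k : nat) (s : board n k) : board n k :=
  foldl (fun t r => chase_row i r t) s (iota 2 i.-1).

Definition all_off (i n k : nat) (s : board n k) : Prop :=
  forall r (c : 'I_n), (1 <= r <= i)%N -> s r c = 0.

Definition one_pass_solvable (i n k : nat) (s : board n k) : Prop :=
  all_off i (chase i s).

Definition const_board (n k : nat) (v : 'Z_k) : board n k := fun _ _ => v.

From mathcomp Require Import all_boot all_order all_algebra zify ring.

Set Implicit Arguments.
Unset Strict Implicit.
Unset Printing Implicit Defensive.

(* Chasing a board lit uniformly with v keeps every row constant.  Once rows
   2..j are chased, row j holds y_j, where y_0 = 0, y_1 = v and
   y_(j+2) = v - y_j - 3 y_(j+1); with Cassini's identity this solves to
   y_j = (-1)^(j+1) F_j F_(j+1) v.  So the board is one-pass solvable iff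
   k | F_i F_(i+1) (k - q), i.e. iff k divides F_i or F_(i+1), and for prime k
   the Fibonacci numbers divisible by k are exactly those of index a multiple
   of alpha(k). *)

Import GRing.Theory.

Lemma fibSS m : fib m.+2 = fib m.+1 + fib m. Proof. by []. Qed.

Lemma fibD m n : fib (m + n.+1) = fib m.+1 * fib n.+1 + fib m * fib n.
Proof.
elim: m n => [|m IHm] n; first by rewrite add0n mul1n mul0n addn0.
by rewrite addSnnS IHm !fibSS; ring.
Qed.

Lemma coprime_fibS m : coprime (fib m) (fib m.+1).
Proof. by elim: m => // m IHm; rewrite /coprime fibSS gcdnDl gcdnC. Qed.

Lemma prime_dvdn_fibD k a m : prime k -> k %| fib a ->
  (k %| fib (a + m)) = (k %| fib m).
Proof.
move=> k_pr k_fa; case: m => [|m]; first by rewrite addn0 k_fa dvdn0.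
have k_fa1 : ~~ (k %| fib a.+1).
  apply/negP => k_fa1.
  have : k %| 1 by rewrite -(eqP (coprime_fibS a)) dvdn_gcd k_fa k_fa1.
  by rewrite gtnNdvd // prime_gt1.
rewrite fibD dvdn_addl; last exact: dvdn_mulr.
by rewrite Euclid_dvdM // (negPf k_fa1).
Qed.

Lemma dvdn_fib_restricted_period k a m : prime k -> restricted_period k a ->
  (k %| fib m) = (a %| m).
Proof.
move=> k_pr [a_gt0 k_fa a_min].
have k_fib_mod r : (k %| fib (m %/ a * a + r)) = (k %| fib r).
  by elim: (m %/ a) => // d IHd; rewrite mulSn -addnA prime_dvdn_fibD.
rewrite {1}(divn_eq m a) k_fib_mod -[a %| m]/(m %% a == 0).
case: (m %% a) (ltn_pmod m a_gt0) => [|r] r_lt; first exact: dvdn0.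
by apply/negP => /(a_min r.+1 isT); rewrite leqNgt r_lt.
Qed.

Local Open Scope ring_scope.

Lemma fib_cassini (R : comRingType) j :
  (fib j)%:R ^+ 2 + (fib j)%:R * (fib j.+1)%:R - (fib j.+1)%:R ^+ 2
  = (-1) ^+ j.+1 :> R.
Proof.
elim: j => [|j IHj]; first by rewrite mul0r expr0n add0r sub0r expr1n.
by rewrite fibSS natrD [RHS]exprS -IHj; ring.
Qed.

Lemma ordS_neq n (c : 'I_n) : (1 < n)%N -> ordS c != c.
Proof.
move=> n_gt1; rewrite -val_eqE /= -{2}(modn_small (ltn_ord c)).
by rewrite eqn_mod_dvd // subSnn dvdn1 gtn_eqF.
Qed.

Lemma ordS2_neq n (c : 'I_n) : (2 < n)%N -> ordS (ordS c) != c.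
Proof.
move=> n_gt2; rewrite -val_eqE /= -[(_ %% n).+1]addn1 modnDml addn1 -addn2.
rewrite -{2}(modn_small (ltn_ord c)) eqn_mod_dvd ?leq_addr // addKn.
by apply/negP => /dvdn_leq-/(_ isT); rewrite leqNgt n_gt2.
Qed.

Lemma card_col_nbhd n (c' : 'I_n) : (2 < n)%N ->
  #|[pred c : 'I_n | (c' == c) || col_adj c c']| = 3%N.
Proof.
move=> n_gt2; have n_gt1 := ltnW n_gt2.
have nbhd : [pred c | (c' == c) || col_adj c c'] =i [:: c'; ordS c'; ord_pred c'].
  move=> c; rewrite !inE -[col_adj c c']/((c != c') && ((c' == ordS c) || (c == ordS c'))).
  rewrite [c' == ordS c]eq_sym (can2_eq (@ordSK n) (@ord_predK n)) [c' == c]eq_sym.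
  by case: eqVneq => //= _; rewrite orbC.
have pred_neq : ord_pred c' != c'.
  by rewrite -(inj_eq (@ordS_inj n)) ord_predK eq_sym ordS_neq.
have S_pred_neq : ordS c' != ord_pred c'.
  by rewrite -(inj_eq (@ordS_inj n)) ord_predK ordS2_neq.
rewrite (eq_card nbhd); apply/card_uniqP; rewrite /= !inE negb_or !andbT.
by rewrite ![c' == _]eq_sym ordS_neq // pred_neq S_pred_neq.
Qed.

Section ConstChaseRow.
Variables (R : zmodType) (v : R).

(* Row j+1 has received the -y_(j-1) presses of row j; chasing it presses each
   of its buttons -y_j times, and each of its lights is hit by three of these
   presses (itself and its two cylinder neighbours). *)
Fixpoint chase_const_row j : R :=
  match j with
  | 0 => 0
  | 1 => v
  | (j'.+1 as j1).+1 => v - chase_const_row j' - chase_const_row j1 *+ 3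
  end.

Lemma chase_const_rowSS j :
  chase_const_row j.+2 = v - chase_const_row j - chase_const_row j.+1 *+ 3.
Proof. by []. Qed.

Definition chase_const_profile j r : R :=
  if (r < j)%N then 0
  else if r == j then chase_const_row j
  else if r == j.+1 then v - chase_const_row j.-1
  else v.

End ConstChaseRow.

Lemma chase_const_rowE (R : comRingType) (v : R) j :
  chase_const_row v j = (-1) ^+ j.+1 * (fib j * fib j.+1)%:R * v.
Proof.
suff /(_ j)[] : forall l,
    chase_const_row v l = (-1) ^+ l.+1 * (fib l * fib l.+1)%:R * v /\
    chase_const_row v l.+1 = (-1) ^+ l.+2 * (fib l.+1 * fib l.+2)%:R * v by [].
elim=> {j} [|j [IHj IHj1]].
  by split; rewrite /= ?mul0n ?mulr0 ?mul0r // mul1n addn0 mulr1n sqrrN expr1n !mul1r.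
split=> //; rewrite chase_const_rowSS IHj IHj1.
have cassini : 1 = (-1) ^+ j.+1 *
    ((fib j)%:R ^+ 2 + (fib j)%:R * (fib j.+1)%:R - (fib j.+1)%:R ^+ 2) :> R.
  by rewrite fib_cassini -expr2 sqrr_sign.
rewrite -[X in X - _ - _]mul1r {1}cassini !fibSS !natrM !natrD !exprS.
ring.
Qed.

Section Chasing.
Variables (i n k : nat).
Hypothesis n_gt2 : (2 < n)%N.

Lemma card_affects r r' (c' : 'I_n) : (1 <= r' <= i)%N ->
  #|[pred c | affects i r c r' c']| =
  (if r' == r then 3 else if (r' == r.+1) || (r == r'.+1) then 1 else 0)%N.
Proof.
move=> /andP[r'_ge1 r'_le]; rewrite /affects r'_ge1 r'_le /=.
have [->|r'_neq] := eqVneq r' r.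
  rewrite -(card_col_nbhd c' n_gt2); apply: eq_card => c /=.
  by rewrite !inE /= (ltn_eqF (ltnSn r)) orbb andbF orbF.
case: ifP => r_adj.
  by apply: (@eq_card1 _ c') => c; rewrite !inE /= andbT orbF eq_sym.
by rewrite -(card0 'I_n); apply: eq_card => c; rewrite !inE /= andbF.
Qed.

Lemma press_foldlE r (f : 'I_n -> 'Z_k) (cs : seq 'I_n) (s : board n k) r' c' :
  foldl (fun t c => press i r c (f c) t) s cs r' c' =
  s r' c' + \sum_(c <- cs) (if affects i r c r' c' then f c else 0).
Proof.
elim: cs s => [|c cs IHcs] s /=; first by rewrite big_nil addr0.
by rewrite IHcs big_cons /press addrA.
Qed.

Lemma chase_rowE r (s : board n k) r' c' :
  chase_row i r s r' c' =
  s r' c' + \sum_(c < n) (if affects i r c r' c' then - s r.-1 c else 0).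
Proof. by rewrite /chase_row press_foldlE big_enum. Qed.

Definition has_const_profile (v : 'Z_k) j (s : board n k) : Prop :=
  forall r c, (1 <= r <= i)%N -> s r c = chase_const_profile v j r.

Ltac decide_ifs :=
  repeat match goal with |- context [if ?b then _ else _] =>
    first [rewrite (_ : b = true); last by lia
          | rewrite (_ : b = false); last by lia] end.

Lemma chase_row_profile v j (s : board n k) : (1 <= j < i)%N ->
  has_const_profile v j s -> has_const_profile v j.+1 (chase_row i j.+1 s).
Proof.
move=> /andP[j_ge1 j_lt] s_prof r c r_in.
have row_j c0 : s j c0 = chase_const_row v j.
  by rewrite s_prof ?j_ge1 ?(ltnW j_lt) // /chase_const_profile ltnn eqxx.
rewrite chase_rowE (eq_bigr (fun c0 =>
  if affects i j.+1 c0 r c then - chase_const_row v j else 0)); last first.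
  by move=> c0 _; rewrite row_j.
rewrite -big_mkcond sumr_const card_affects // s_prof // /chase_const_profile.
have [r_lt|[->|[->|[->|r_gt]]]] : (r < j \/ r = j \/ r = j.+1 \/ r = j.+2 \/ j.+2 < r)%N by lia.
all: decide_ifs.
- by rewrite mulr0n addr0.
- by rewrite mulr1n subrr.
- by case: j j_ge1 {row_j s_prof j_lt r_in} => // j _; rewrite mulNrn chase_const_rowSS.
- by rewrite mulr1n.
- by rewrite mulr0n addr0.
Qed.

Lemma chase_rows_profile v l j (s : board n k) : (1 <= j)%N -> (j + l <= i)%N ->
  has_const_profile v j s ->
  has_const_profile v (j + l) (foldl (fun t r => chase_row i r t) s (iota j.+1 l)).
Proof.
elim: l j s => [|l IHl] j s j_ge1 jl_le s_prof /=; first by rewrite addn0.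
rewrite -addSnnS; apply: IHl; rewrite ?addSnnS //.
by apply: chase_row_profile; rewrite // j_ge1 -addn1 (leq_trans _ jl_le) ?leq_add2l.
Qed.

Lemma chase_const_board v : (1 <= i)%N ->
  has_const_profile v i (chase i (@const_board n k v)).
Proof.
move=> i_ge1; have const_prof : has_const_profile v 1 (@const_board n k v).
  move=> r c /andP[r_ge1 _]; rewrite /chase_const_profile /const_board ltnNge r_ge1 /=.
  by case: r r_ge1 => [|[|[|r]]] // _; rewrite subr0.
by have := @chase_rows_profile v i.-1 1 _ isT; rewrite add1n prednK //; apply.
Qed.

Lemma one_pass_solvable_const v : (1 <= i)%N ->
  one_pass_solvable i (@const_board n k v) <-> chase_const_row v i = 0.
Proof.
move=> i_ge1; have chased := chase_const_board v i_ge1.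
have profile_i r : (1 <= r <= i)%N ->
    chase_const_profile v i r = if r == i then chase_const_row v i else 0.
  by case/andP=> _ r_le; rewrite /chase_const_profile ltn_neqAle r_le andbT; case: eqP.
split=> [solved | row_i0 r c r_in].
  have c0 : 'I_n := Ordinal (ltnW (ltnW n_gt2)).
  have i_in : (1 <= i <= i)%N by rewrite i_ge1 leqnn.
  have := profile_i i i_in; rewrite eqxx => <-.
  by rewrite -(chased i c0 i_in); apply: solved.
by rewrite chased // profile_i //; case: eqP.
Qed.

End Chasing.

Lemma Zp_nat_eq0 k m : (1 < k)%N -> ((m%:R : 'Z_k) == 0) = (k %| m)%N.
Proof. by move=> k_gt1; rewrite -val_eqE /= val_Zp_nat. Qed.

Theorem theorem4 (k q n i a : nat) :
  prime k -> (1 <= q <= k - 1)%N -> (3 <= n)%N -> (1 <= i)%N ->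
  restricted_period k a ->
  one_pass_solvable i (@const_board n k (k - q)%N%:R) <->
  (i %% a == 0)%N \/ ((i + 1) %% a == 0)%N.
Proof.
move=> k_pr q_range n_ge3 i_ge1 k_period.
rewrite one_pass_solvable_const // chase_const_rowE -mulrA -natrM (rwP eqP).
rewrite mulrI_eq0; last exact: lreg_sign.
rewrite Zp_nat_eq0 ?prime_gt1 // !Euclid_dvdM //.
have -> : (k %| k - q)%N = false by rewrite gtnNdvd //; lia.
rewrite orbF !(dvdn_fib_restricted_period _ k_pr k_period) addn1.
by split=> /orP.
Qed.
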